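(* Let $q=p^f\geq 5$ with $p$ an odd prime, and let $I=\{0,\ f/\gcd(3,f),\ 2f/\gcd(3,f)\}$. Let $b\in\mathbb{F}_{q^2}^\times$ with $b+b^q=1$ and $b\neq b^q$, and let $a\in\mathbb{F}_{q^2}^\times$ be an element of order $q-1$ such that $(a+a^{-1}+1)^{p^i}\neq a+a^{-1}b^{q+1}$ for all $i\in I$, $(a+a^{-1}+1)^{p^i}\neq 1+b^{q+1}$ for all $i\in I$, and $a+a^{-1}b^{q+1}\neq 1+b^{q+1}$. Let \[ X=\begin{pmatrix}-b^q&b&b^{q+1}\\ 1&0&b^q\\ 1&1&-b\end{pmatrix},\quad Y=\begin{pmatrix}0&0&a\\ 0&-1&0\\ a^{-1}&0&0\end{pmatrix},\quad Z=\begin{pmatrix}0&0&1\\ 0&-1&0\\ 1&0&0\end{pmatrix}. \] Then $\langle X,Y,Z\rangle$ is an irreducible subgroup of $\mathrm{SU}_3(q)$, i.e. it stabilizes no subspace of $\mathbb{F}_{q^2}^3$ of dimension $1$ or $2$.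
   Context: Here $\mathrm{SU}_3(q)=\{A\in\mathrm{SL}_3(q^2): \overline{A}^{T}WA=W\}$, where $\overline{(a_{ij})}=(a_{ij}^q)$ and $W=\begin{pmatrix}0&0&1\\0&1&0\\1&0&0\end{pmatrix}$; matrices act on row vectors in $\mathbb{F}_{q^2}^3$ by right multiplication. *)

From HB Require Import structures.
From mathcomp Require Import all_boot all_order all_algebra all_fingroup all_field.
Set Implicit Arguments. Unset Strict Implicit. Unset Printing Implicit Defensive.
Import GRing.Theory.
Local Open Scope ring_scope.

Definition mx3 (F : nzRingType) (a11 a12 a13 a21 a22 a23 a31 a32 a33 : F)
  : 'M[F]_3 :=
  \matrix_(i < 3, j < 3)
    nth 0 (nth [::] [:: [:: a11; a12; a13]; [:: a21; a22; a23];
                        [:: a31; a32; a33]] i) j.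

Definition Wmx (F : nzRingType) : 'M[F]_3 := mx3 0 0 1 0 1 0 1 0 0.

(* SU_3(q) inside SL_3(q^2): det A = 1 and (A^{(q)})^T W A = W,
   where A^{(q)} raises every entry to the q-th power. *)
Definition SU3 (F : fieldType) (q : nat) : pred 'M[F]_3 :=
  [pred A | (\det A == 1) &&
            ((map_mx (fun x => x ^+ q) A)^T *m Wmx F *m A == Wmx F)].

Inductive gen3 (F : fieldType) (X Y Z : 'M[F]_3) : 'M[F]_3 -> Prop :=
  | gen3_1 : gen3 X Y Z 1%:M
  | gen3_X A : gen3 X Y Z A -> gen3 X Y Z (A *m X)
  | gen3_Y A : gen3 X Y Z A -> gen3 X Y Z (A *m Y)
  | gen3_Z A : gen3 X Y Z A -> gen3 X Y Z (A *m Z)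
  | gen3_Xi A : gen3 X Y Z A -> gen3 X Y Z (A *m invmx X)
  | gen3_Yi A : gen3 X Y Z A -> gen3 X Y Z (A *m invmx Y)
  | gen3_Zi A : gen3 X Y Z A -> gen3 X Y Z (A *m invmx Z).

(* Y and Z are antidiagonal apart from their middle entry -1, and a != a^-1,
   so the only line stable under both is spanned by the middle basis vector,
   which X moves because X_21 = 1 != 0.  A stable plane has a stable
   annihilator line for the transposed generators, which have the same shape
   with a and a^-1 swapped and with (X^T)_21 = b != 0.  Membership in SU_3(q)
   is checked on the generators, using that x |-> x^q is additive and, since
   #|F| = q^2, an involution. *)

From HB Require Import structures.
From mathcomp Require Import all_boot all_order all_algebra all_fingroup all_field.
From mathcomp Require Import ring.
Set Implicit Arguments.
Unset Strict Implicit.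
Unset Printing Implicit Defensive.
Import GRing.Theory.
Local Open Scope ring_scope.

Section Mx3Algebra.

Variable R : comNzRingType.
Implicit Types (x y z c : R) (A : 'M[R]_3) (v : 'rV[R]_3).

Definition row3 x y z : 'rV[R]_3 := \row_(j < 3) nth 0 [:: x; y; z] j.

Lemma mx3_eta A :
  A = mx3 (A 0 0) (A 0 1) (A 0 2) (A 1 0) (A 1 1) (A 1 2) (A 2 0) (A 2 1) (A 2 2).
Proof.
apply/matrixP => i j; rewrite !mxE.
by case: i => [[|[|[|i]]] Hi] //; case: j => [[|[|[|j]]] Hj] //=;
  congr (A _ _); apply: val_inj.
Qed.

Lemma row3_eta v : v = row3 (v 0 0) (v 0 1) (v 0 2).
Proof.
apply/matrixP => i j; rewrite !mxE ord1.
by case: j => [[|[|[|j]]] Hj] //=; congr (v 0 _); apply: val_inj.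
Qed.

Lemma row3_inj x y z x' y' z' :
  row3 x y z = row3 x' y' z' -> [/\ x = x', y = y' & z = z'].
Proof.
by move/matrixP=> e; split; [move: (e 0 0) | move: (e 0 1) | move: (e 0 2)];
  rewrite !mxE.
Qed.

Lemma row3_0 : row3 0 0 0 = 0.
Proof. by apply/matrixP => i j; rewrite !mxE; case: j => [[|[|[|j]]] Hj]. Qed.

Lemma scale_row3 c x y z : c *: row3 x y z = row3 (c * x) (c * y) (c * z).
Proof. by apply/matrixP => i j; rewrite !mxE; case: j => [[|[|[|j]]] Hj]. Qed.

Lemma row3_mul_mx3 x y z (a11 a12 a13 a21 a22 a23 a31 a32 a33 : R) :
  row3 x y z *m mx3 a11 a12 a13 a21 a22 a23 a31 a32 a33 =
  row3 (x * a11 + y * a21 + z * a31) (x * a12 + y * a22 + z * a32)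
       (x * a13 + y * a23 + z * a33).
Proof.
apply/matrixP => i j; rewrite !mxE !big_ord_recr big_ord0 /= !mxE /= add0r.
by case: j => [[|[|[|j]]] Hj].
Qed.

Lemma mx3_mul (a11 a12 a13 a21 a22 a23 a31 a32 a33
    b11 b12 b13 b21 b22 b23 b31 b32 b33 : R) :
  mx3 a11 a12 a13 a21 a22 a23 a31 a32 a33 *m mx3 b11 b12 b13 b21 b22 b23 b31 b32 b33 =
  mx3 (a11 * b11 + a12 * b21 + a13 * b31) (a11 * b12 + a12 * b22 + a13 * b32)
      (a11 * b13 + a12 * b23 + a13 * b33)
      (a21 * b11 + a22 * b21 + a23 * b31) (a21 * b12 + a22 * b22 + a23 * b32)
      (a21 * b13 + a22 * b23 + a23 * b33)
      (a31 * b11 + a32 * b21 + a33 * b31) (a31 * b12 + a32 * b22 + a33 * b32)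
      (a31 * b13 + a32 * b23 + a33 * b33).
Proof.
apply/matrixP => i j; rewrite !mxE !big_ord_recr big_ord0 /= !mxE /= add0r.
by case: i => [[|[|[|i]]] Hi] //; case: j => [[|[|[|j]]] Hj].
Qed.

Lemma mx3_tr (a11 a12 a13 a21 a22 a23 a31 a32 a33 : R) :
  (mx3 a11 a12 a13 a21 a22 a23 a31 a32 a33)^T =
  mx3 a11 a21 a31 a12 a22 a32 a13 a23 a33.
Proof.
apply/matrixP => i j; rewrite !mxE.
by case: i => [[|[|[|i]]] Hi] //; case: j => [[|[|[|j]]] Hj].
Qed.

Lemma map_mx3 (g : R -> R) (a11 a12 a13 a21 a22 a23 a31 a32 a33 : R) :
  map_mx g (mx3 a11 a12 a13 a21 a22 a23 a31 a32 a33) =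
  mx3 (g a11) (g a12) (g a13) (g a21) (g a22) (g a23) (g a31) (g a32) (g a33).
Proof.
apply/matrixP => i j; rewrite !mxE.
by case: i => [[|[|[|i]]] Hi] //; case: j => [[|[|[|j]]] Hj].
Qed.

Lemma det_mx3 (a11 a12 a13 a21 a22 a23 a31 a32 a33 : R) :
  \det (mx3 a11 a12 a13 a21 a22 a23 a31 a32 a33) =
  a11 * (a22 * a33 - a23 * a32) - a12 * (a21 * a33 - a23 * a31)
  + a13 * (a21 * a32 - a22 * a31).
Proof.
rewrite (expand_det_row _ ord0) !big_ord_recr big_ord0 /= /cofactor.
rewrite !(expand_det_row _ ord0) !big_ord_recr big_ord0 /= /cofactor.
by rewrite !det_mx11 !mxE /= !big_ord0 /=; ring.
Qed.

Definition Xmx x y : 'M[R]_3 := mx3 (- y) x (x * y) 1 0 y 1 1 (- x).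

Definition Ymx x y : 'M[R]_3 := mx3 0 0 x 0 (-1) 0 y 0 0.

Lemma Ymx_tr x y : (Ymx x y)^T = Ymx y x.
Proof. by rewrite mx3_tr. Qed.

Lemma det_Xmx x y : x + y = 1 -> \det (Xmx x y) = 1.
Proof.
move=> xDy; have -> : y = 1 - x by rewrite -xDy; ring.
by rewrite det_mx3; ring.
Qed.

Lemma det_Ymx x y : \det (Ymx x y) = x * y.
Proof. by rewrite det_mx3; ring. Qed.

Lemma Xmx_unitary x y : x + y = 1 -> (Xmx y x)^T *m Wmx R *m Xmx x y = Wmx R.
Proof.
move=> xDy; have -> : y = 1 - x by rewrite -xDy; ring.
by rewrite mx3_tr !mx3_mul; congr mx3; ring.
Qed.

Lemma Ymx_unitary x y : x * y = 1 -> (Ymx x y)^T *m Wmx R *m Ymx x y = Wmx R.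
Proof.
move=> xy1; rewrite mx3_tr !mx3_mul.
by congr mx3; try ring; rewrite -[RHS]xy1; ring.
Qed.

End Mx3Algebra.

Section StableLines.

Variable F : fieldType.

Lemma Ymx_common_eigenvector (x y z al be : F) : al != be ->
  stablemx (row3 x y z) (Ymx 1 1) -> stablemx (row3 x y z) (Ymx al be) ->
  x = 0 /\ z = 0.
Proof.
move=> al_neq_be /sub_rVP[l eZ] /sub_rVP[m eY].
move: eZ eY; rewrite !row3_mul_mx3 !scale_row3 !(mulr0, mulr1, addr0, add0r).
move=> /row3_inj[zE _ xE] /row3_inj[zYE _ xYE].
have x0 : x = 0.
  have : x * (al - be) = 0.
    have -> : x * (al - be) =
      (x * al - m * z) + m * (z - l * x) - l * (z * be - m * x) - be * (x - l * z).
      by ring.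
    by rewrite xYE zYE -zE -xE !subrr; ring.
  by move/eqP; rewrite mulf_eq0 subr_eq0 (negbTE al_neq_be) orbF => /eqP.
by split; rewrite // zE x0 mulr0.
Qed.

Lemma no_common_stable_line (A : 'M[F]_3) (v : 'rV[F]_3) al be :
  al != be -> A 1 0 != 0 -> stablemx v (Ymx 1 1) -> stablemx v (Ymx al be) ->
  stablemx v A -> v = 0.
Proof.
move=> al_neq_be A10 + + /sub_rVP[l]; rewrite (row3_eta v).
move=> /(Ymx_common_eigenvector al_neq_be)/[apply] -[-> ->].
rewrite [A]mx3_eta row3_mul_mx3 scale_row3 => /row3_inj[+ _ _].
rewrite !(mul0r, mulr0, addr0, add0r) => /eqP.
by rewrite mulf_eq0 (negbTE A10) orbF => /eqP ->; rewrite row3_0.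
Qed.

Lemma eqmx_rank1 m n (U : 'M[F]_(m, n)) :
  \rank U = 1%N -> exists2 v : 'rV_n, v != 0 & (v :=: U)%MS.
Proof.
move=> rU; have /rowV0Pn[v vU v0] : U != 0 by rewrite -mxrank_eq0 rU.
exists v => //; apply/eqmxP.
by rewrite -(mxrank_leqif_eq vU).2 rank_rV v0 rU.
Qed.

Lemma stable_kermx_tr m n (U : 'M[F]_(m, n)) (g : 'M[F]_n) :
  stablemx U g -> stablemx (kermx U^T) g^T.
Proof.
case/submxP=> D UgE; apply/sub_kermxP.
by rewrite -mulmxA -trmx_mul UgE trmx_mul mulmxA mulmx_ker mul0mx.
Qed.

Lemma no_stable_rank1 (A : 'M[F]_3) al be m (V : 'M[F]_(m, 3)) :
  al != be -> A 1 0 != 0 -> \rank V = 1%N ->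
  stablemx V (Ymx 1 1) -> stablemx V (Ymx al be) -> ~~ stablemx V A.
Proof.
move=> al_neq_be A10 /eqmx_rank1[v v0 vV].
rewrite -!(eqmx_stable _ vV) => sZ sY; apply/negP => sA.
by move/eqP: v0; apply; apply: no_common_stable_line sZ sY sA.
Qed.

Lemma mx3_irreducible (A : 'M[F]_3) al be m (U : 'M[F]_(m, 3)) :
  al != be -> A 1 0 != 0 -> A 0 1 != 0 -> (\rank U == 1%N) || (\rank U == 2%N) ->
  stablemx U (Ymx 1 1) -> stablemx U (Ymx al be) -> ~~ stablemx U A.
Proof.
move=> al_neq_be A10 A01 /orP[]/eqP rU sZ sY.
  exact: no_stable_rank1 al_neq_be A10 rU sZ sY.
have rK : \rank (kermx U^T) = 1%N by rewrite mxrank_ker mxrank_tr rU.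
apply/negP => /stable_kermx_tr; apply/negP.
have A01' : A^T 1 0 != 0 by rewrite mxE.
have al_neq_be' : be != al by rewrite eq_sym.
move: (stable_kermx_tr sZ) (stable_kermx_tr sY); rewrite !Ymx_tr.
exact: no_stable_rank1 al_neq_be' A01' rK.
Qed.

End StableLines.

Section UnitaryGroup.

Variables (F : fieldType) (q : nat).
Hypothesis q_gt0 : (0 < q)%N.
Hypothesis exprDq : forall x y : F, (x + y) ^+ q = x ^+ q + y ^+ q.

Local Notation frob := (fun x : F => x ^+ q).

Lemma expr0q : (0 : F) ^+ q = 0.
Proof. by rewrite expr0n eqn0Ngt q_gt0. Qed.

Lemma exprNq (x : F) : (- x) ^+ q = - x ^+ q.
Proof. by apply/eqP; rewrite -subr_eq0 opprK -exprDq addNr expr0q. Qed.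

Lemma map_frob_mulmx (A B : 'M[F]_3) :
  map_mx frob (A *m B) = map_mx frob A *m map_mx frob B.
Proof.
apply/matrixP => i j; rewrite !mxE (big_morph frob exprDq expr0q).
by apply: eq_bigr => k _; rewrite !mxE exprMn.
Qed.

Lemma map_frob1 : map_mx frob (1%:M : 'M[F]_3) = 1%:M.
Proof. by apply/matrixP => i j; rewrite !mxE; case: (i == j); rewrite ?expr1n ?expr0q. Qed.

Lemma SU3_1 : (1%:M : 'M[F]_3) \in SU3 q.
Proof. by rewrite inE det1 map_frob1 trmx1 mul1mx mulmx1 !eqxx. Qed.

Lemma SU3_mul (A B : 'M[F]_3) : A \in SU3 q -> B \in SU3 q -> A *m B \in SU3 q.
Proof.
rewrite !inE => /andP[/eqP detA /eqP uA] /andP[/eqP detB /eqP uB].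
rewrite det_mulmx detA detB mulr1 eqxx /= map_frob_mulmx trmx_mul.
by rewrite -!mulmxA (mulmxA _ (Wmx F)) (mulmxA _ _ B) uA mulmxA uB.
Qed.

Lemma SU3_inv (A : 'M[F]_3) : A \in SU3 q -> invmx A \in SU3 q.
Proof.
rewrite !inE => /andP[/eqP detA /eqP uA].
have A_unit : A \in unitmx by rewrite unitmxE detA unitr1.
rewrite det_inv detA invr1 eqxx /= -{1}uA !mulmxA -trmx_mul -map_frob_mulmx.
by rewrite mulmxV // map_frob1 trmx1 mul1mx -mulmxA mulmxV // mulmx1.
Qed.

Lemma gen3_SU3 (X Y Z : 'M[F]_3) :
  X \in SU3 q -> Y \in SU3 q -> Z \in SU3 q ->
  forall g, gen3 X Y Z g -> g \in SU3 q.
Proof.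
move=> SX SY SZ g; elim; first exact: SU3_1.
all: by move=> A _ SA; apply: SU3_mul; rewrite // SU3_inv.
Qed.

Lemma map_frob_Xmx (x y : F) : map_mx frob (Xmx x y) = Xmx (x ^+ q) (y ^+ q).
Proof. by rewrite map_mx3 !exprNq exprMn expr1n expr0q. Qed.

Lemma map_frob_Ymx (x y : F) : map_mx frob (Ymx x y) = Ymx (x ^+ q) (y ^+ q).
Proof. by rewrite map_mx3 exprNq expr1n expr0q. Qed.

Lemma Xmx_SU3 (b : F) :
  b + b ^+ q = 1 -> (b ^+ q) ^+ q = b -> Xmx b (b ^+ q) \in SU3 q.
Proof.
move=> bDbq bqq.
by rewrite inE det_Xmx // map_frob_Xmx bqq Xmx_unitary // !eqxx.
Qed.

Lemma Ymx_SU3 (x y : F) :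
  x * y = 1 -> x ^+ q = x -> y ^+ q = y -> Ymx x y \in SU3 q.
Proof.
move=> xy1 xq yq.
by rewrite inE det_Ymx xy1 map_frob_Ymx xq yq Ymx_unitary // !eqxx.
Qed.

End UnitaryGroup.

Lemma prim_root_neq_inv (F : fieldType) n (z : F) :
  (2 < n)%N -> n.-primitive_root z -> z != z^-1.
Proof.
move=> n_gt2 prim_z; apply/eqP => zV.
have z_neq0 : z != 0 by rewrite (prim_root_eq0 prim_z) -lt0n (ltn_trans _ n_gt2).
have : (n %| 2)%N by rewrite (prim_order_dvd prim_z) expr2 {2}zV mulfV.
by move/(dvdn_leq (isT : (0 < 2)%N)); rewrite leqNgt n_gt2.
Qed.

Lemma exprD_pchar_pow (F : finFieldType) p k f (x y : F) :
  prime p -> #|F| = (p ^ k)%N -> (x + y) ^+ (p ^ f) = x ^+ (p ^ f) + y ^+ (p ^ f).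
Proof.
move=> p_pr cardF; apply: exprDn_pchar.
by rewrite pnatX (pnatE _ p_pr) (card_finPcharP cardF p_pr).
Qed.

Theorem lemma2p5 (F : finFieldType) (p f : nat) (a b : F) :
  prime p -> odd p -> (0 < f)%N -> (5 <= p ^ f)%N ->
  #|F| = ((p ^ f) ^ 2)%N ->
  b != 0 -> b + b ^+ (p ^ f)%N = 1 -> b != b ^+ (p ^ f)%N ->
  a != 0 -> (p ^ f).-1%N.-primitive_root a ->
  (forall i : nat, i \in [:: 0%N; (f %/ gcdn 3 f)%N; ((2 * f) %/ gcdn 3 f)%N] ->
     (a + a^-1 + 1) ^+ (p ^ i)%N != a + a^-1 * b ^+ (p ^ f).+1%N) ->
  (forall i : nat, i \in [:: 0%N; (f %/ gcdn 3 f)%N; ((2 * f) %/ gcdn 3 f)%N] ->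
     (a + a^-1 + 1) ^+ (p ^ i)%N != 1 + b ^+ (p ^ f).+1%N) ->
  a + a^-1 * b ^+ (p ^ f).+1%N != 1 + b ^+ (p ^ f).+1%N ->
  let q := (p ^ f)%N in
  let X := mx3 (- b ^+ q) b (b ^+ q.+1)
               1 0 (b ^+ q)
               1 1 (- b) in
  let Y := mx3 0 0 a
               0 (-1) 0
               a^-1 0 0 in
  let Z := mx3 0 0 1
               0 (-1) 0
               1 0 0 in
  (forall g, gen3 X Y Z g -> g \in SU3 q) /\
  (forall U : 'M[F]_3, (\rank U == 1%N) || (\rank U == 2%N) ->
     ~ (forall g, gen3 X Y Z g -> stablemx U g)).
Proof.
(* Irreducibility only needs a != a^-1 (from q >= 5) and b != 0. *)
move=> p_pr _ _ q_ge5 cardF b_neq0 bDbq _ a_neq0 a_prim _ _ _ q X Y Z.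
have q_gt0 : (0 < q)%N by rewrite expn_gt0 prime_gt0.
have exprDq (x y : F) : (x + y) ^+ q = x ^+ q + y ^+ q.
  by apply: (exprD_pchar_pow _ _ _ p_pr); rewrite cardF -expnM.
have exprqq (x : F) : (x ^+ q) ^+ q = x by rewrite -exprM mulnn -cardF expf_card.
have aq : a ^+ q = a.
  by rewrite -(prednK q_gt0) exprS (prim_expr_order a_prim) mulr1.
have a_neq_inv : a != a^-1.
  by apply: prim_root_neq_inv a_prim; rewrite -ltnS prednK // (leq_trans _ q_ge5).
have XE : X = Xmx b (b ^+ q) by rewrite /X exprS.
split.
  have SX : X \in SU3 q by rewrite XE; apply: Xmx_SU3.
  have SY : Y \in SU3 q by apply: Ymx_SU3; rewrite ?mulfV ?exprVn ?aq.
  have SZ : Z \in SU3 q by apply: Ymx_SU3; rewrite ?mulr1 ?expr1n.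
  exact: gen3_SU3 SX SY SZ.
move=> U rU stabU.
have stab_gen g : gen3 X Y Z (1%:M *m g) -> stablemx U g by move/stabU; rewrite mul1mx.
have X10 : X 1 0 != 0 by rewrite mxE oner_neq0.
have X01 : X 0 1 != 0 by rewrite mxE.
have /negP := mx3_irreducible a_neq_inv X10 X01 rU
  (stab_gen _ (gen3_Z (gen3_1 X Y Z))) (stab_gen _ (gen3_Y (gen3_1 X Y Z))).
by apply; apply: stab_gen; apply: gen3_X; apply: gen3_1.
Qed.
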